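(* Let $\nu\ge3$ be a square-free integer with $\nu\equiv2$ or $3\pmod 4$, and for $n\ge0$ let $P_n(t)=(t^2-\nu)^{\circ n}\in\mathbb{Z}[t]$ (so $P_0(t)=t$), with constant term $C_n$. Let $p$ be an odd prime not dividing $\nu$ such that $p$ divides $C_n$ for some $n\ge1$, and let $n(p)$ be the least positive integer $n$ with $p\mid C_n$. Then for any non-negative integers $k,\ell$ which are distinct modulo $n(p)$, the reductions $\bar P_k$ and $\bar P_\ell$ modulo $p$ are coprime in $\mathbb{F}_p[t]$. *)

From HB Require Import structures.
From mathcomp Require Import all_boot all_order all_algebra.
Set Implicit Arguments. Unset Strict Implicit. Unset Printing Implicit Defensive.
Import Order.TTheory GRing.Theory Num.Theory.
Local Open Scope ring_scope.

Definition squarefree (n : nat) : Prop :=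
  forall d : nat, (d * d %| n)%N -> d = 1%N.

Definition Pit (nu : nat) (n : nat) : {poly int} :=
  iter n (fun q : {poly int} => ('X^2 - (nu%:R)%:P) \Po q) 'X.

Definition Cterm (nu : nat) (n : nat) : int := (Pit nu n)`_0.

Definition redp (p : nat) (q : {poly int}) : {poly 'F_p} :=
  map_poly (fun z : int => z%:~R) q.

From HB Require Import structures.
From mathcomp Require Import all_boot all_order all_algebra.
Import Order.TTheory GRing.Theory Num.Theory.
Local Open Scope ring_scope.

(* Since [P_(d + k) = P_d \Po P_k], modulo [P_k] the polynomial [P_(d + k)] is
   congruent to the constant [C_d], so the two reductions are coprime as soon
   as [p] does not divide [C_d].  The constant terms are the orbit of [0] under
   [x |-> x^2 - nu]; modulo [p] this orbit returns to [0] for the first time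
   after [n(p)] steps, hence [p %| C_d] exactly when [n(p) %| d]. *)

Lemma coprimep_comp_poly (F : fieldType) (P Q : {poly F}) :
  Q`_0 != 0 -> coprimep P (Q \Po P).
Proof.
have [S ->] : exists S, Q \Po P = S * P + (Q`_0)%:P.
  elim/poly_ind: Q => [|Q c _]; first by exists 0; rewrite comp_poly0 coef0 mul0r add0r.
  by exists (Q \Po P); rewrite comp_poly_MXaddC coefD coefMX coefC add0r.
move=> Q0_neq0; rewrite coprimep_addl_mul -[_%:P]mulr1 mul_polyC.
by rewrite coprimepZr // coprimep1.
Qed.

Lemma iter_period_dvdn (T : Type) (f : T -> T) (x : T) (n m : nat) :
  (0 < n)%N -> iter n f x = x ->
  (forall k, (0 < k < n)%N -> iter k f x <> x) ->
  iter m f x = x -> (n %| m)%N.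
Proof.
move=> n_gt0 fix_n min_n fix_m.
have iter_mod : iter m f x = iter (m %% n)%N f x.
  by rewrite {1}(divn_eq m n) addnC iterD iterM (iter_fix _ fix_n).
rewrite /dvdn; apply: contraT; rewrite -lt0n => m_mod_gt0.
by case: (min_n (m %% n)%N); [rewrite m_mod_gt0 ltn_pmod | rewrite -iter_mod].
Qed.

Lemma PitD (nu a b : nat) : Pit nu (a + b) = Pit nu a \Po Pit nu b.
Proof.
elim: a => [|a IHa]; first by rewrite add0n /Pit /= comp_polyX.
by rewrite addSn /Pit /= -/(Pit nu (a + b)) IHa comp_polyA.
Qed.

Lemma CtermS (nu n : nat) : Cterm nu n.+1 = Cterm nu n ^+ 2 - nu%:R.
Proof.
rewrite /Cterm /Pit /= -/(Pit nu n) comp_polyB comp_polyC comp_Xn_poly.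
by rewrite coefB coefC /= expr2 coef0M expr2.
Qed.

Lemma intr_Cterm (R : nzRingType) (nu n : nat) :
  (Cterm nu n)%:~R = iter n (fun x : R => x ^+ 2 - nu%:R) 0.
Proof.
elim: n => [|n IHn]; first by rewrite /Cterm /Pit /= coefX.
by rewrite CtermS rmorphB rmorphXn rmorph_nat /= IHn.
Qed.

Lemma redp_Pit_coprime (nu p k d : nat) :
  prime p -> ~~ (p%:Z %| Cterm nu d)%Z ->
  coprimep (redp p (Pit nu k)) (redp p (Pit nu (d + k))).
Proof.
move=> p_prime p_ndvd_Cd; rewrite PitD /redp map_comp_poly.
by apply: coprimep_comp_poly; rewrite coef_map /= -(dvdz_pcharf (pchar_Fp p_prime)).
Qed.

Theorem lemma4p6 (nu p np : nat)
  (Hnu3 : (3 <= nu)%N) (Hsf : squarefree nu)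
  (Hmod : (nu %% 4 == 2)%N || (nu %% 4 == 3)%N)
  (Hp : prime p) (Hodd : odd p) (Hpnu : ~~ (p %| nu)%N)
  (Hnp_pos : (0 < np)%N)
  (Hnp_div : (p%:Z %| Cterm nu np)%Z)
  (Hnp_min : forall m : nat, (0 < m)%N -> (m < np)%N -> ~~ (p%:Z %| Cterm nu m)%Z) :
  forall k l : nat, (k %% np != l %% np)%N ->
    coprimep (redp p (Pit nu k)) (redp p (Pit nu l)).
Proof.
pose f (x : 'F_p) := x ^+ 2 - nu%:R.
have dvd_CtermE m : (p%:Z %| Cterm nu m)%Z = (iter m f 0 == 0).
  by rewrite (dvdz_pcharf (pchar_Fp Hp)) intr_Cterm.
have dvd_Cterm_period m : (p%:Z %| Cterm nu m)%Z -> (np %| m)%N.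
  rewrite dvd_CtermE => /eqP; apply: iter_period_dvdn => // [|j /andP[j_gt0 j_lt]].
    apply/eqP; rewrite -dvd_CtermE; exact: Hnp_div.
  apply/eqP; rewrite -dvd_CtermE; exact: Hnp_min.
suff lt_coprime k l : (k < l)%N -> (k %% np != l %% np)%N ->
    coprimep (redp p (Pit nu k)) (redp p (Pit nu l)).
  move=> k l; case: (ltngtP k l) => [lt_kl|lt_lk|->]; last by rewrite eqxx.
    exact: lt_coprime lt_kl.
  by rewrite eq_sym coprimep_sym; apply: lt_coprime lt_lk.
move=> lt_kl neq_mod; rewrite -(subnK (ltnW lt_kl)).
apply: redp_Pit_coprime Hp _; apply: contra neq_mod => /dvd_Cterm_period.
by rewrite eq_sym (eqn_mod_dvd np (ltnW lt_kl)).
Qed.
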